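(* Assume $\beta<\infty$. The following hold. - (a) $1\le\sqrt{n}\,\beta$. - (b) $n\,\mathbb{E}|L_1|^q\le\beta^{q-2}$ for every $2\le q\le3$. - (c) If $\gamma<\infty$, then $|\kappa_s|\le\sqrt{\gamma_s}\le\sqrt{\gamma}$ for $s=1,\dots,k$. - (d) Let $3/2<\alpha<2$, put $\delta=(2-\alpha)/(\alpha-1)$, and let $s$ be an integer with $1\le s<\min(\delta^{-1},k)$. Then $|\kappa_s|\le\beta^{\delta s}+\gamma_s^{(\alpha)}\le\beta^{\delta s}+\gamma^{(\alpha)}$.
   Context: **Setting.** Let $k\ge1$ and $n\ge1$ be integers. Let $X,X_1,\dots,X_n$ be i.i.d. random variables. Let $l$ be a real Borel function. For $p=1,\dots,k$, let $t_p$ be a real Borel function of $p$ variables that is invariant under permutations of its arguments. Put $L_i=l(X_i)$. For $A=\{j_1,\dots,j_p\}\subset\{1,\dots,n\}$ with $|A|=p$, put $T_A=t_p(X_{j_1},\dots,X_{j_p})$, and write $T_{1\dots p}=T_{\{1,\dots,p\}}$. Define $\mathbb{T}=\sum_{p=1}^k\sum_{|A|=p}T_A$. **Standing assumptions.** - $\mathbb{E}L_1=0$ and $n\,\mathbb{E}L_1^2=1$. - Each $t_p(X_1,\dots,X_p)$ is integrable and degenerate: $\mathbb{E}[t_p(X_1,\dots,X_p)\mid X_2,\dots,X_p]=0$ a.s. For $p=1$ this means $\mathbb{E}t_1(X_1)=0$. **Notation.** - $\beta=n\,\mathbb{E}|L_1|^3$. - $\gamma_s=\binom{n}{s}\mathbb{E}T_{1\dots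 s}^2$ and $\gamma=\operatorname{var}\mathbb{T}=\sum_{s=1}^k\gamma_s$. - $\gamma_s^{(\alpha)}=\binom{n}{s}\mathbb{E}|T_{1\dots s}|^\alpha$ and $\gamma^{(\alpha)}=\sum_{s=1}^k\gamma_s^{(\alpha)}$. - $\kappa_s=\binom{n}{s}\mathbb{E}[L_1\cdots L_s\,\mathbb{T}]=\binom{n}{s}\mathbb{E}[L_1\cdots L_sT_{1\dots s}]$. *)

From HB Require Import structures.
From mathcomp Require Import all_boot all_order all_algebra.
From mathcomp Require Import all_classical all_reals all_analysis.

Set Implicit Arguments.
Unset Strict Implicit.
Unset Printing Implicit Defensive.

Import Order.TTheory GRing.Theory Num.Theory.

Local Open Scope classical_set_scope.
Local Open Scope ring_scope.

(* Indexing convention: the paper's X_1, X_2, ... are X 0, X 1, ...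
   (so the paper's X_j is X (j-1)). *)

Section defs.
Context {d} {Omega : measurableType d} {R : realType}.
Variable P : probability Omega R.

Definition Tv (t : forall p : nat, p.-tuple R -> R) (X : nat -> Omega -> R)
  (p : nat) : Omega -> R :=
  fun w => t p [tuple X (val i) w | i < p].

Definition tailvec (X : nat -> Omega -> R) (p : nat) :
  Omega -> (p.-1).-tuple R :=
  fun w => [tuple X (val i).+1 w | i < p.-1].

(* the X_i (i < N) are mutually independent: product rule for every
   finite family of events {X_i in B_i} (B_i = setT for unused indices) *)
Definition mutually_independent (N : nat) (X : nat -> Omega -> R) : Prop :=
  forall (B : nat -> set R), (forall i, measurable (B i)) ->
    P (\bigcap_(i in [set j | (j < N)%N]) (X i @^-1` B i)) =
    (\prod_(i < N) P (X i @^-1` B i))%E.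

Definition identically_distributed (N : nat) (X : nat -> Omega -> R) : Prop :=
  forall i, (i < N)%N -> forall B : set R, measurable B ->
    P (X i @^-1` B) = P (X 0%N @^-1` B).

(* degeneracy:  E[ t_p(X_1,...,X_p) | X_2,...,X_p ] = 0 a.s., i.e. (by the
   defining property of conditional expectation, the variable being
   integrable) E[ T_{1..p} 1_G ] = 0 for every G in sigma(X_2,...,X_p),
   i.e. for every G = {(X_2,...,X_p) in A} with A Borel in R^(p-1). *)
Definition degenerate (t : forall p : nat, p.-tuple R -> R)
  (X : nat -> Omega -> R) (p : nat) : Prop :=
  forall A : set ((p.-1).-tuple R), measurable A ->
    ('E_P[fun w => (Tv t X p w * \1_(tailvec X p @^-1` A) w)%R] = 0)%E.

Definition beta (n : nat) (l : R -> R) (X : nat -> Omega -> R) : \bar R :=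
  (n%:R%:E * 'E_P[fun w => (`|l (X 0%N w)| ^+ 3)%R])%E.

Definition gamma_s (n : nat) t X (s : nat) : \bar R :=
  ('C(n, s)%:R%:E * 'E_P[fun w => (Tv t X s w ^+ 2)%R])%E.

Definition gamma (n k : nat) t X : \bar R :=
  (\sum_(1 <= s < k.+1) gamma_s n t X s)%E.

Definition gamma_sa (n : nat) t X (alpha : R) (s : nat) : \bar R :=
  ('C(n, s)%:R%:E * 'E_P[fun w => (`|Tv t X s w| `^ alpha)%R])%E.

Definition gamma_a (n k : nat) t X (alpha : R) : \bar R :=
  (\sum_(1 <= s < k.+1) gamma_sa n t X alpha s)%E.

Definition kappa (n : nat) (l : R -> R) t X (s : nat) : \bar R :=
  ('C(n, s)%:R%:E *
   'E_P[fun w => ((\prod_(i < s) l (X (val i) w)) * Tv t X s w)%R])%E.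

End defs.

From HB Require Import structures.
From mathcomp Require Import all_boot all_order all_algebra.
From mathcomp Require Import all_classical all_reals all_analysis.
From mathcomp Require Import measurable_realfun ring lra.

(* Everything comes from Hoelder's inequality.  Lyapunov's inequality
   (E L^2)^3 <= (E|L|^3)^2 gives (a), and interpolating E|L|^q between the
   second and third moments gives (b).  For (c) and (d), Hoelder with conjugate
   exponents (p, q) bounds |kappa_s| by C(n,s) (E|L_1...L_s|^p)^(1/p) (E|T|^q)^(1/q);
   independence turns E|L_1...L_s|^p into (E|L|^p)^s, and C(n,s) <= n^s with (b)
   controls the first factor.  Part (c) is the case p = q = 2; part (d) takes
   q = alpha, p = alpha/(alpha-1) in [2, 3] and finishes with Young's inequality. *)

Set Implicit Arguments.
Unset Strict Implicit.
Unset Printing Implicit Defensive.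

Import Order.TTheory GRing.Theory Num.Theory.
Local Open Scope classical_set_scope.
Local Open Scope ring_scope.

Section weighted_transfer.
Local Open Scope ereal_scope.
Context {d} {T : measurableType d} {R : realType} (mu : {measure set T -> \bar R}).
Import HBNNSimple.

Lemma integral_weighted_nnsfun (G f : T -> R) (phi : {nnsfun R >-> R}) :
  measurable_fun setT G -> measurable_fun setT f -> (forall w, (0 <= G w)%R) ->
  \int[mu]_w (G w * phi (f w))%:E =
  \sum_(r \in range phi) (r%:E * \int[mu]_w (G w * \1_(phi @^-1` [set r]) (f w))%:E).
Proof.
move=> mG mf G0.
have mI r : measurable_fun setT (fun w => \1_(phi @^-1` [set r]) (f w) : R).
  exact: measurableT_comp (measurable_indic (measurable_funPTI _ _)) mf.
transitivity (\int[mu]_w \sum_(r \in range phi)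
    (r * (G w * \1_(phi @^-1` [set r]) (f w)))%:E).
  apply: eq_integral => w _; rewrite fsumEFin// fimfunE mulr_fsumr.
  by congr (_%:E); apply: eq_fsbigr => r _; rewrite mulrCA.
rewrite ge0_integral_fsum//; last 2 first.
- by move=> r; apply/measurable_EFinP; do 2 apply: measurable_funM => //.
- move=> r w _; rewrite lee_fin indicE.
  have [/set_mem /= <-|_] := boolP (f w \in phi @^-1` [set r]).
    by rewrite mulr1 mulr_ge0.
  by rewrite !mulr0.
apply: eq_fsbigr => r /set_mem [x _ <-].
under eq_integral do rewrite EFinM.
rewrite ge0_integralZl_EFin//.
- by move=> w _; rewrite lee_fin mulr_ge0 // indicE.
- by apply/measurable_EFinP; apply: measurable_funM.
Qed.

(* Monotone approximation of [g] by simple functions reduces the claim to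
   indicators. *)
Lemma eq_integral_weighted_comp (G1 f1 G2 f2 : T -> R) :
  measurable_fun setT G1 -> measurable_fun setT f1 ->
  measurable_fun setT G2 -> measurable_fun setT f2 ->
  (forall w, (0 <= G1 w)%R) -> (forall w, (0 <= G2 w)%R) ->
  (forall A, measurable A ->
     \int[mu]_w (G1 w * \1_A (f1 w))%:E = \int[mu]_w (G2 w * \1_A (f2 w))%:E) ->
  forall g : R -> R, measurable_fun setT g -> (forall x, (0 <= g x)%R) ->
  \int[mu]_w (G1 w * g (f1 w))%:E = \int[mu]_w (G2 w * g (f2 w))%:E.
Proof.
move=> mG1 mf1 mG2 mf2 G10 G20 eq_indic g mg g0.
have mEg : measurable_fun setT (EFin \o g) by exact/measurable_EFinP.
pose phi := nnsfun_approx (@measurableT _ R) mEg.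
have lim_phi (G f : T -> R) : measurable_fun setT G -> measurable_fun setT f ->
    (forall w, (0 <= G w)%R) ->
    \int[mu]_w (G w * g (f w))%:E =
    limn (fun n => \int[mu]_w (G w * phi n (f w))%:E).
  move=> mG mf G0; rewrite -monotone_convergence //.
  - apply: eq_integral => w _; apply/esym/cvg_lim => //; rewrite EFinM.
    under eq_fun do rewrite EFinM.
    apply: cvgeZl => //.
    exact: (cvg_nnsfun_approx _ mEg (fun x _ => g0 x) (I : setT (f w))).
  - move=> n; apply/measurable_EFinP; apply: measurable_funM => //.
    exact: measurableT_comp mf.
  - by move=> n w _; rewrite lee_fin mulr_ge0.
  - move=> w _ n m nm; rewrite lee_fin ler_wpM2l//.
    exact/lefP/nd_nnsfun_approx.
rewrite (lim_phi G1 f1)// (lim_phi G2 f2)//; congr (limn _); apply/funext => n.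
by rewrite !integral_weighted_nnsfun//; apply: eq_fsbigr => r _; rewrite eq_indic.
Qed.

End weighted_transfer.

Section iid_product.
Local Open Scope ereal_scope.
Context {d} {Omega : measurableType d} {R : realType} (P : probability Omega R)
  (N : nat) (X : nat -> Omega -> R).
Hypotheses (mX : forall i, measurable_fun setT (X i))
  (indepX : mutually_independent P N X) (iddX : identically_distributed P N X).

Definition tail_event m (B : nat -> set R) :=
  \bigcap_(i in [set j | (m <= j < N)%N]) (X i @^-1` B i).

Lemma measurable_tail_event m B : (forall i, measurable (B i)) ->
  measurable (tail_event m B).
Proof.
move=> mB; apply: bigcap_measurableType => i _.
by rewrite -[X i @^-1` _]setTI; exact: mX.
Qed.

Lemma eq_tail_event m B B' : (forall i, (m <= i)%N -> B i = B' i) ->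
  tail_event m B = tail_event m B'.
Proof.
by move=> BB'; apply/seteqP; split => w /= H i /= /[dup] /andP[mi _] /H; rewrite BB'.
Qed.

Lemma tail_eventS m B : (m < N)%N ->
  tail_event m B = X m @^-1` B m `&` tail_event m.+1 B.
Proof.
move=> mN; apply/seteqP; split => w.
- move=> H; split; first by apply: H => /=; rewrite leqnn.
  by move=> i /andP[mi iN]; apply: H => /=; rewrite iN (ltnW mi).
- move=> [H1 H2] i /andP[+ iN]; rewrite leq_eqVlt => /orP[/eqP <-//|mi].
  by apply: H2 => /=; rewrite mi.
Qed.

Lemma probability_tail_event m B : (forall i, measurable (B i)) -> (m <= N)%N ->
  P (tail_event m B) = \prod_(m <= i < N) P (X i @^-1` B i).
Proof.
move=> mB mN.
pose B' i := if (i < m)%N then setT else B i.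
have -> : tail_event m B = \bigcap_(i in [set j | (j < N)%N]) (X i @^-1` B' i).
  apply/seteqP; split => w /= H i /= iN; rewrite /B'.
  - by case: ltnP => // mi; apply: H; rewrite /= mi.
  - by case/andP: iN => mi iN; have := H i iN; rewrite /B' ltnNge mi.
rewrite indepX; last by move=> i; rewrite /B'; case: ifP.
rewrite -(big_mkord xpredT (fun i => P (X i @^-1` B' i))).
rewrite (big_cat_nat (leq0n m) mN) /= big_nat_cond big1 ?mul1e; last first.
  by move=> i /andP[/andP[_ im] _]; rewrite /B' im preimage_setT probability_setT.
by apply: eq_big_nat => i /andP[mi _]; rewrite /B' ltnNge mi.
Qed.

Lemma tail_event_set m A B : (m < N)%N ->
  tail_event m (fun i => if i == m then A else B i) =
  X m @^-1` A `&` tail_event m.+1 B.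
Proof.
move=> mN; rewrite tail_eventS// eqxx; congr (_ `&` _).
by apply: eq_tail_event => i mi; rewrite gtn_eqF.
Qed.

Lemma probability_preimage_tail_eventI m A B : (m < N)%N -> measurable A ->
  (forall i, measurable (B i)) ->
  P (X m @^-1` A `&` tail_event m.+1 B) = P (X m @^-1` A) * P (tail_event m.+1 B).
Proof.
move=> mN mA mB; rewrite -tail_event_set// probability_tail_event ?(ltnW mN)//;
  last by move=> i; case: eqP.
rewrite big_ltn// eqxx (probability_tail_event mB mN); congr (_ * _).
by apply: eq_big_nat => i /andP[mi _]; rewrite gtn_eqF.
Qed.

Variable g : R -> R.
Hypotheses (mg : measurable_fun setT g) (g0 : forall x, (0 <= g x)%R)
  (g_fin : \int[P]_w (g (X 0%N w))%:E < +oo).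

Let e := fine (\int[P]_w (g (X 0%N w))%:E).

Let integral_gE : \int[P]_w (g (X 0%N w))%:E = e%:E.
Proof. by rewrite fineK// ge0_fin_numE// integral_ge0// => w _; exact: g0. Qed.

Let e_ge0 : (0 <= e)%R.
Proof. by rewrite fine_ge0// integral_ge0// => w _; rewrite lee_fin. Qed.

Let prod_g m w := (\prod_(i < m) g (X i w))%R.

Let measurable_prod_g m : measurable_fun setT (prod_g m).
Proof. by apply: measurable_prod => i _; exact: measurableT_comp. Qed.

Let prod_g_ge0 m w : (0 <= prod_g m w)%R.
Proof. exact: prodr_ge0. Qed.

(* In the induction step [eq_integral_weighted_comp] reduces [g (X m)] to the
   indicators [\1_A (X m)], for which the claim is the induction hypothesis
   applied to [B] updated at [m]. *)
Lemma integral_prod_tail_event m B : (m <= N)%N -> (forall i, measurable (B i)) ->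
  \int[P]_w (prod_g m w * \1_(tail_event m B) w)%:E = (e ^+ m)%:E * P (tail_event m B).
Proof.
elim: m B => [B _ mB|m IH B mN mB].
  under eq_integral do rewrite /prod_g big_ord0 mul1r.
  by rewrite integral_indic ?setIT ?mul1e//; exact: measurable_tail_event.
have mJ := measurable_tail_event m.+1 mB.
pose c := (e ^+ m * fine (P (tail_event m.+1 B)))%R.
have c0 : (0 <= c)%R by rewrite mulr_ge0 ?exprn_ge0// fine_ge0.
pose G w := (prod_g m w * \1_(tail_event m.+1 B) w)%R.
have mG : measurable_fun setT G.
  by apply: measurable_funM => //; exact: measurable_indic.
have G0 w : (0 <= G w)%R by rewrite mulr_ge0// indicE.
have PJE : P (tail_event m.+1 B) = (fine (P (tail_event m.+1 B)))%:E.
  by rewrite fineK// fin_num_measure.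
have eq_indic A : measurable A ->
    \int[P]_w (G w * \1_A (X m w))%:E = \int[P]_w (c * \1_A (X 0%N w))%:E.
  move=> mA; have mXA : measurable (X 0%N @^-1` A).
    by rewrite -[X 0%N @^-1` A]setTI; exact: mX.
  transitivity (\int[P]_w
      (prod_g m w * \1_(tail_event m (fun i => if i == m then A else B i)) w)%:E).
    apply: eq_integral => w _; rewrite tail_event_set//.
    by rewrite /G indicI -mulrA [X in (_ * X)%R]mulrC.
  rewrite IH ?(ltnW mN)//; last by move=> i; case: eqP.
  rewrite tail_event_set//; under [RHS]eq_integral do rewrite EFinM.
  rewrite probability_preimage_tail_eventI// ge0_integralZl_EFin//; last first.
    by apply/measurable_EFinP; exact: measurableT_comp (measurable_indic mA) _.
  rewrite integral_indic// setIT iddX// /c EFinM -PJE.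
  by rewrite muleAC -muleA muleC.
transitivity (\int[P]_w (G w * g (X m w))%:E).
  by apply: eq_integral => w _; rewrite /G /prod_g big_ord_recr /= mulrAC.
rewrite (eq_integral_weighted_comp mG (mX m) (measurable_cst c) (mX 0%N) G0
  (fun=> c0) eq_indic mg g0).
under eq_integral do rewrite EFinM.
rewrite ge0_integralZl_EFin//; last 2 first.
- by move=> w _; rewrite lee_fin.
- by apply/measurable_EFinP; apply: measurableT_comp.
by rewrite integral_gE /c PJE -!EFinM exprSr mulrAC.
Qed.

Lemma integral_prod_iid s : (s <= N)%N ->
  \int[P]_w (\prod_(i < s) g (X i w))%:E = (e ^+ s)%:E.
Proof.
move=> sN; have := integral_prod_tail_event sN (fun=> measurableT).
have -> : tail_event s (fun=> setT) = setT by apply/seteqP; split.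
by rewrite probability_setT mule1 => <-; apply: eq_integral => w _; rewrite indicT mulr1.
Qed.

End iid_product.

Lemma hoelder_integral {d} {T : measurableType d} {R : realType}
    (mu : {measure set T -> \bar R}) (U V : T -> R) (p q : R) :
  measurable_fun setT U -> measurable_fun setT V ->
  0 < p -> 0 < q -> p^-1 + q^-1 = 1 ->
  (\int[mu]_w (`|U w * V w|)%:E <=
   (\int[mu]_w (`|U w| `^ p)%:E) `^ p^-1 * (\int[mu]_w (`|V w| `^ q)%:E) `^ q^-1)%E.
Proof.
move=> mU mV p0 q0 pq; have := hoelder mu mU mV p0 q0 pq.
rewrite !unlock /=; under eq_integral do rewrite powRr1//.
by rewrite invr1 poweRe1// integral_ge0.
Qed.

Lemma bin_leq_expn n s : ('C(n, s) <= n ^ s)%N.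
Proof.
rewrite (leq_trans (leq_pmulr _ (fact_gt0 s)))// bin_ffact ffact_prod.
rewrite -[s in (_ <= n ^ s)%N]card_ord -prod_nat_const.
by apply: leq_prod => i _; exact: leq_subr.
Qed.

Lemma powR_prod {R : realType} (I : Type) (r : seq I) (x : I -> R) (p : R) :
  (forall i, 0 <= x i) -> (\prod_(i <- r) x i) `^ p = \prod_(i <- r) x i `^ p.
Proof.
move=> x0; elim: r => [|i r IH]; first by rewrite !big_nil powR1.
by rewrite !big_cons powRM ?IH// prodr_ge0.
Qed.

(* Young's inequality with the weights [1/p] and [1/r] dropped. *)
Lemma powR_inv_mul_le_add {R : realType} (x z p r : R) :
  0 <= x -> 0 <= z -> 0 < p -> 0 < r -> p^-1 + r^-1 = 1 ->
  x `^ p^-1 * z `^ r^-1 <= x + z.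
Proof.
move=> x0 z0 p0 r0 pr.
have := @conjugate_powR R (x `^ p^-1) (z `^ r^-1) p r (powR_ge0 _ _) (powR_ge0 _ _) p0 r0 pr.
rewrite -!powRrM !mulVf ?gt_eqF// !powRr1// => /le_trans; apply.
have ip : 0 < p^-1 by rewrite invr_gt0.
have ir : 0 < r^-1 by rewrite invr_gt0.
by apply: lerD; apply: ler_piMr => //; lra.
Qed.

Lemma lee_sum_nneg_nat_term {R : realType} (F : nat -> \bar R) (m n i : nat) :
  (forall j, (0 <= F j)%E) -> (m <= i < n)%N -> (F i <= \sum_(m <= j < n) F j)%E.
Proof.
move=> F0 /andP[mi i_n]; rewrite (@big_cat_nat _ _ _ i) ?(ltnW i_n)//= [X in (_ <= _ + X)%E]big_ltn//.
have S0 k l : (0 <= \sum_(k <= j < l) F j)%E by exact: sume_ge0.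
exact: le_trans (leeDl _ (S0 _ _)) (leeDr _ (S0 _ _)).
Qed.

Section moments.
Local Open Scope ereal_scope.
Context {d} {T : measurableType d} {R : realType} (P : probability T R) (Y : T -> R).
Hypotheses (mY : measurable_fun setT Y) (Y0 : forall w, (0 <= Y w)%R).
Variables (a2 a3 : R).
Hypotheses (Y2 : \int[P]_w (Y w ^+ 2)%:E = a2%:E)
  (Y3 : \int[P]_w (Y w ^+ 3)%:E = a3%:E).

Let a2_ge0 : (0 <= a2)%R.
Proof. by rewrite -lee_fin -Y2 integral_ge0// => w _; rewrite lee_fin exprn_ge0. Qed.

Let a3_ge0 : (0 <= a3)%R.
Proof. by rewrite -lee_fin -Y3 integral_ge0// => w _; rewrite lee_fin exprn_ge0. Qed.

(* Hoelder for [Y^2 * 1] with exponents [3/2] and [3]. *)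
Lemma lyapunov_moment23 : (a2 ^+ 3 <= a3 ^+ 2)%R.
Proof.
have mY2 : measurable_fun setT (fun w => Y w ^+ 2)%R by exact: measurable_funX.
have := hoelder_integral (p := (3/2)%R) (q := 3%R) P mY2 (measurable_cst (1%R : R))
  ltac:(lra) ltac:(lra) ltac:(rewrite invf_div; lra).
under eq_integral do rewrite mulr1 ger0_norm ?exprn_ge0//.
have Y2_32 w : (`|Y w ^+ 2| `^ (3/2) = Y w ^+ 3)%R.
  rewrite ger0_norm ?exprn_ge0// -powR_mulrn// -powRrM.
  by rewrite (_ : 2%:R * (3/2) = 3%:R)%R ?powR_mulrn//; lra.
under [X in _ <= X `^ _ * _ -> _]eq_integral do rewrite Y2_32.
under [X in _ <= _ * X `^ _ -> _]eq_integral do rewrite normr1 powR1.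
have PT : (P : measure T R) setT = 1 by exact: probability_setT.
rewrite integral_cst// PT mul1e poweR_EFin powR1 mule1 Y2 Y3.
rewrite poweR_EFin lee_fin.
move=> /(@lerXn2r R 3 _ _ (a2_ge0 : _ \in Num.nneg) (powR_ge0 _ _ : _ \in Num.nneg)).
move=> /le_trans; apply.
rewrite -(powR_mulrn 3 (powR_ge0 _ _)) -powRrM invf_div.
by rewrite (_ : (2/3 * 3%:R = 2%:R)%R) ?powR_mulrn//; lra.
Qed.

(* Hoelder for [Y^(2(3-q)) * Y^(3(q-2))] with exponents [1/(3-q)] and [1/(q-2)]. *)
Lemma moment_interpolation q : (2 <= q <= 3)%R ->
  \int[P]_w (Y w `^ q)%:E <= (a2 `^ (3 - q) * a3 `^ (q - 2))%:E.
Proof.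
move=> /andP[q2 q3].
have [->|q2'] := eqVneq q 2%R.
  under eq_integral do rewrite powR_mulrn//.
  by rewrite Y2 subrr powRr0 mulr1 (_ : 3 - 2 = 1)%R ?powRr1//; lra.
have [->|q3'] := eqVneq q 3%R.
  under eq_integral do rewrite powR_mulrn//.
  by rewrite Y3 subrr powRr0 mul1r (_ : 3 - 2 = 1)%R ?powRr1//; lra.
have {q2'}q2 : (2 < q)%R by rewrite lt_neqAle eq_sym q2' q2.
have {q3'}q3 : (q < 3)%R by rewrite lt_neqAle q3' q3.
pose U w := (Y w `^ (2 * (3 - q)))%R.
pose V w := (Y w `^ (3 * (q - 2)))%R.
have mU : measurable_fun setT U by exact: measurableT_comp (measurable_powR _) mY.
have mV : measurable_fun setT V by exact: measurableT_comp (measurable_powR _) mY.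
have UVE w : (`|U w * V w| = Y w `^ q)%R.
  rewrite ger0_norm ?mulr_ge0 ?powR_ge0// -powRD; last by apply/implyP => /eqP; lra.
  by rewrite (_ : 2 * (3 - q) + 3 * (q - 2) = q)%R //; lra.
have UE w : (`|U w| `^ (3 - q)^-1 = Y w ^+ 2)%R.
  rewrite ger0_norm ?powR_ge0// -powRrM -powR_mulrn// -mulrA mulfV ?mulr1//.
  by apply/eqP; lra.
have VE w : (`|V w| `^ (q - 2)^-1 = Y w ^+ 3)%R.
  rewrite ger0_norm ?powR_ge0// -powRrM -powR_mulrn// -mulrA mulfV ?mulr1//.
  by apply/eqP; lra.
have := hoelder_integral (p := (3 - q)^-1%R) (q := (q - 2)^-1%R) P mU mV
  ltac:(rewrite invr_gt0; lra) ltac:(rewrite invr_gt0; lra) ltac:(rewrite !invrK; lra).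
under eq_integral do rewrite UVE.
under [X in _ <= X `^ _ * _ -> _]eq_integral do rewrite UE.
under [X in _ <= _ * X `^ _ -> _]eq_integral do rewrite VE.
by rewrite Y2 Y3 !poweR_EFin !invrK -EFinM.
Qed.

End moments.

Section lemma1_bounds.
Local Open Scope ereal_scope.
Context {d} {Omega : measurableType d} {R : realType} (P : probability Omega R).
Variables (n k : nat) (X : nat -> Omega -> R) (l : R -> R)
  (t : forall p : nat, p.-tuple R -> R).
Hypotheses (n_gt0 : (0 < n)%N) (mX : forall i, measurable_fun setT (X i))
  (indepX : mutually_independent P (maxn n k) X)
  (iddX : identically_distributed P (maxn n k) X)
  (ml : measurable_fun setT l)
  (moment2_L : n%:R%:E * 'E_P[fun w => (l (X 0%N w) ^+ 2)%R] = 1)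
  (beta_fin : beta P n l X < +oo).

Let b := fine (beta P n l X).

Let n_gt0R : (0 < n%:R :> R)%R. Proof. by rewrite ltr0n. Qed.

Let measurable_absL : measurable_fun setT (fun w => `|l (X 0%N w)|)%R.
Proof.
exact: measurableT_comp (@normr_measurable R setT) (measurableT_comp ml (mX 0%N)).
Qed.

Lemma moment2_absL : \int[P]_w (`|l (X 0%N w)| ^+ 2)%:E = (n%:R^-1)%:E.
Proof.
under eq_integral do rewrite real_normK ?num_real//.
move: moment2_L; rewrite unlock.
have : 0 <= \int[P]_w (l (X 0%N w) ^+ 2)%:E.
  by apply: integral_ge0 => w _; rewrite lee_fin sqr_ge0.
case: (\int[P]_w _) => [r _ /=||//].
- rewrite -EFinM => -[nr1]; congr EFin.
  by apply: (mulfI (lt0r_neq0 n_gt0R)); rewrite nr1 divff// lt0r_neq0.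
- by move=> _; rewrite gt0_muley ?lte_fin.
Qed.

Lemma moment3_absL : \int[P]_w (`|l (X 0%N w)| ^+ 3)%:E = (n%:R^-1 * b)%:E.
Proof.
move: beta_fin; rewrite /b /beta unlock.
have : 0 <= \int[P]_w (`|l (X 0%N w)| ^+ 3)%:E.
  by apply: integral_ge0 => w _; rewrite lee_fin exprn_ge0.
case: (\int[P]_w _) => [r _ _ /=||//].
- by rewrite mulKf// gt_eqF.
- by move=> _; rewrite gt0_muley ?lte_fin.
Qed.

Let b_ge0 : (0 <= b)%R.
Proof.
by rewrite fine_ge0// /beta mule_ge0 ?lee_fin// unlock integral_ge0// => w _.
Qed.

Lemma sqrt_n_mul_beta_ge1 : (1 <= Num.sqrt n%:R * b)%R.
Proof.
have := lyapunov_moment23 measurable_absL (fun w => normr_ge0 _)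
  moment2_absL moment3_absL.
rewrite exprMn exprSr ler_pM2l ?exprn_gt0 ?invr_gt0// => nb.
rewrite -(@ler_pXn2r _ 2) ?nnegrE ?mulr_ge0 ?sqrtr_ge0// expr1n exprMn.
by rewrite sqr_sqrtr ?ler0n// -[X in (X <= _)%R](mulfV (lt0r_neq0 n_gt0R)) ler_pM2l.
Qed.

Lemma n_mul_moment_le_beta q : (2 <= q <= 3)%R ->
  n%:R%:E * 'E_P[fun w => (`|l (X 0%N w)| `^ q)%R] <= (b `^ (q - 2))%:E.
Proof.
move=> q23; rewrite unlock.
have interp := moment_interpolation measurable_absL (fun w => normr_ge0 _)
  moment2_absL moment3_absL q23.
apply: le_trans (lee_wpmul2l _ interp) _; first by rewrite lee_fin ler0n.
rewrite -EFinM lee_fin powRM ?invr_ge0 ?ler0n// mulrA -powRD; last first.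
  by apply/implyP => _; rewrite invr_eq0 lt0r_neq0.
have -> : (3 - q + (q - 2) = 1 :> R)%R by lra.
by rewrite powRr1 ?invr_ge0 ?ler0n// mulrA mulfV ?lt0r_neq0// mul1r.
Qed.

Lemma moment_absL_le_beta q : (2 <= q <= 3)%R ->
  exists2 M, \int[P]_w (`|l (X 0%N w)| `^ q)%:E = M%:E & (n%:R * M <= b `^ (q - 2))%R.
Proof.
move=> q23; have := n_mul_moment_le_beta q23; rewrite unlock.
have : 0 <= \int[P]_w (`|l (X 0%N w)| `^ q)%:E.
  by apply: integral_ge0 => w _; rewrite lee_fin powR_ge0.
case: (\int[P]_w _) => [r _||//]; first by rewrite -EFinM lee_fin; exists r.
by move=> _; rewrite gt0_muley ?lte_fin// leey_eq.
Qed.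

Lemma abse_kappa_le_hoelder (p q M : R) s :
  (0 < p)%R -> (0 < q)%R -> (p^-1 + q^-1 = 1)%R ->
  (s <= maxn n k)%N -> measurable_fun setT (Tv t X s) ->
  \int[P]_w (`|l (X 0%N w)| `^ p)%:E = M%:E ->
  `|kappa P n l t X s| <=
    ('C(n, s)%:R * (M ^+ s) `^ p^-1)%:E * (\int[P]_w (`|Tv t X s w| `^ q)%:E) `^ q^-1.
Proof.
move=> p0 q0 pq sN mT EM.
have mU : measurable_fun setT (fun w => \prod_(i < s) l (X i w))%R.
  by apply: measurable_prod => i _; exact: measurableT_comp ml (mX i).
have mg : measurable_fun setT (fun x => `|l x| `^ p)%R.
  exact: measurableT_comp (measurable_powR p) (measurableT_comp (@normr_measurable R setT) ml).
have prodE : \int[P]_w (`|\prod_(i < s) l (X i w)| `^ p)%:E = (M ^+ s)%:E.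
  under eq_integral do rewrite normr_prod powR_prod//.
  rewrite (integral_prod_iid mX indepX iddX mg (fun x => powR_ge0 _ _)) ?EM ?ltry//.
have C0 : 0 <= 'C(n, s)%:R%:E :> \bar R by rewrite lee_fin ler0n.
rewrite /kappa unlock abseM abse_EFin ger0_norm ?ler0n// EFinM -muleA.
apply: le_trans (lee_wpmul2l C0 (le_abse_integral _ _ _)) _ => //.
  by apply/measurable_EFinP; exact: measurable_funM.
under eq_integral do rewrite abse_EFin.
apply: lee_wpmul2l => //; apply: le_trans (hoelder_integral P mU mT p0 q0 pq) _.
by rewrite prodE poweR_EFin.
Qed.

Lemma abse_kappa_le_sqrt_gamma_s s :
  (s <= maxn n k)%N -> measurable_fun setT (Tv t X s) ->
  gamma_s P n t X s < +oo ->
  `|kappa P n l t X s| <= (Num.sqrt (fine (gamma_s P n t X s)))%:E.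
Proof.
move=> sN mT gs_fin; have [C0|C_gt0] := posnP 'C(n, s).
  by rewrite /kappa C0 mul0e abse0 lee_fin sqrtr_ge0.
have [r Tsq r_ge0] : exists2 r, \int[P]_w (Tv t X s w ^+ 2)%:E = r%:E & (0 <= r)%R.
  move: gs_fin; rewrite /gamma_s unlock.
  have : 0 <= \int[P]_w (Tv t X s w ^+ 2)%:E.
    by apply: integral_ge0 => w _; rewrite lee_fin sqr_ge0.
  case: (\int[P]_w _) => [r r0 _||//]; first by exists r => //; rewrite -lee_fin.
  by move=> _; rewrite gt0_muley ?lte_fin ?ltr0n.
have L2 : \int[P]_w (`|l (X 0%N w)| `^ 2)%:E = (n%:R^-1)%:E.
  by under eq_integral do rewrite powR_mulrn//; exact: moment2_absL.
have half : (2^-1 + 2^-1 = 1 :> R)%R by rewrite [RHS](splitr 1) mul1r.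
have two_gt0 : (0 < 2 :> R)%R by [].
have T2 : \int[P]_w (`|Tv t X s w| `^ 2)%:E = r%:E.
  by rewrite -Tsq; apply: eq_integral => w _; rewrite powR_mulrn// real_normK ?num_real.
move/le_trans: (abse_kappa_le_hoelder two_gt0 two_gt0 half sN mT L2); apply.
rewrite T2 poweR_EFin -EFinM lee_fin /gamma_s unlock Tsq /=.
rewrite !powR12_sqrt ?exprn_ge0 ?invr_ge0 ?ler0n// sqrtrM ?ler0n//.
rewrite ler_wpM2r ?sqrtr_ge0// -(@ler_pXn2r _ 2) ?nnegrE ?mulr_ge0 ?sqrtr_ge0//.
rewrite exprMn !sqr_sqrtr ?exprn_ge0 ?invr_ge0 ?ler0n// expr2 -mulrA ler_piMr//.
by rewrite exprVn ler_pdivrMr ?exprn_gt0// mul1r -natrX ler_nat bin_leq_expn.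
Qed.

Lemma abse_kappa_le_beta_gamma_sa alpha s :
  (3 / 2 < alpha < 2)%R -> (s <= maxn n k)%N -> measurable_fun setT (Tv t X s) ->
  `|kappa P n l t X s| <=
    (b `^ ((2 - alpha) / (alpha - 1) * s%:R))%:E + gamma_sa P n t X alpha s.
Proof.
move=> /andP[alpha_gt32 alpha_lt2] sN mT; have [C0|C_gt0] := posnP 'C(n, s).
  by rewrite /kappa /gamma_sa C0 !mul0e abse0 adde0 lee_fin powR_ge0.
pose p := (alpha / (alpha - 1))%R.
have alpha_gt0 : (0 < alpha)%R by lra.
have p23 : (2 <= p <= 3)%R.
  have alpha1 : (0 < alpha - 1)%R by lra.
  by rewrite /p ler_pdivlMr // ler_pdivrMr //; apply/andP; split; lra.
have p_gt0 : (0 < p)%R by case/andP: p23 => p2 _; lra.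
have alpha1_neq0 : (alpha - 1 != 0)%R by apply/eqP; lra.
have alpha_neq0 : (alpha != 0)%R by apply/eqP; lra.
have pq : (p^-1 + alpha^-1 = 1)%R by rewrite /p invf_div; field.
have -> : ((2 - alpha) / (alpha - 1) = p - 2)%R by rewrite /p; field.
have [M LpM nM] := moment_absL_le_beta p23.
have M_ge0 : (0 <= M)%R.
  by rewrite -lee_fin -LpM integral_ge0// => w _; rewrite lee_fin powR_ge0.
rewrite /gamma_sa unlock.
have : 0 <= \int[P]_w (`|Tv t X s w| `^ alpha)%:E.
  by apply: integral_ge0 => w _; rewrite lee_fin powR_ge0.
case Tal : (\int[P]_w _) => [r||//] r_ge0; last first.
  by rewrite gt0_muley ?lte_fin ?ltr0n// addey// leey.
move/le_trans: (abse_kappa_le_hoelder p_gt0 alpha_gt0 pq sN mT LpM); apply.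
rewrite Tal poweR_EFin -!EFinM -EFinD lee_fin.
have C_ge0 : (0 <= 'C(n, s)%:R :> R)%R by rewrite ler0n.
rewrite [X in (X <= _)%R](_ : _ = ('C(n, s)%:R * M ^+ s) `^ p^-1 *
                                  ('C(n, s)%:R * r) `^ alpha^-1)%R; last first.
  rewrite !powRM ?exprn_ge0// mulrACA -powRD; last first.
    by apply/implyP => _; rewrite pnatr_eq0 -lt0n.
  by rewrite pq powRr1// mulrA.
apply: le_trans (powR_inv_mul_le_add _ _ p_gt0 alpha_gt0 pq) _.
- by rewrite mulr_ge0 ?exprn_ge0.
- by rewrite mulr_ge0.
rewrite lerD2r (@le_trans _ _ ((n%:R * M) ^+ s)%R)//.
  by rewrite exprMn ler_wpM2r ?exprn_ge0// -natrX ler_nat bin_leq_expn.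
rewrite powRrM powR_mulrn ?powR_ge0// lerXn2r// nnegrE ?mulr_ge0 ?powR_ge0//.
Qed.

End lemma1_bounds.

Section gamma_partial_sums.
Local Open Scope ereal_scope.
Context {d} {Omega : measurableType d} {R : realType} (P : probability Omega R).
Variables (n k : nat) (X : nat -> Omega -> R) (t : forall p : nat, p.-tuple R -> R).

Lemma gamma_s_ge0 s : 0 <= gamma_s P n t X s.
Proof.
rewrite /gamma_s unlock mule_ge0 ?lee_fin// integral_ge0// => w _.
by rewrite lee_fin sqr_ge0.
Qed.

Lemma gamma_s_le_gamma s : (1 <= s <= k)%N -> gamma_s P n t X s <= gamma P n k t X.
Proof.
by move=> /andP[s1 sk]; apply: lee_sum_nneg_nat_term; [exact: gamma_s_ge0|rewrite s1].
Qed.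

Lemma gamma_sa_le_gamma_a alpha s :
  (1 <= s <= k)%N -> gamma_sa P n t X alpha s <= gamma_a P n k t X alpha.
Proof.
move=> /andP[s1 sk]; apply: lee_sum_nneg_nat_term; last by rewrite s1.
by move=> i; rewrite /gamma_sa unlock mule_ge0 ?lee_fin// integral_ge0// => w _;
  rewrite lee_fin powR_ge0.
Qed.

End gamma_partial_sums.

Theorem lemma1 (d : measure_display) (Omega : measurableType d) (R : realType)
  (P : probability Omega R) (k n : nat)
  (X : nat -> Omega -> R) (l : R -> R)
  (t : forall p : nat, p.-tuple R -> R) :
  (1 <= k)%N -> (1 <= n)%N ->
  (* X_1, ..., X_n (and, harmlessly, up to index max(n,k)) are i.i.d. *)
  (forall i, measurable_fun setT (X i)) ->
  mutually_independent P (maxn n k) X ->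
  identically_distributed P (maxn n k) X ->
  measurable_fun setT l ->
  P.-integrable setT (EFin \o (fun w => l (X 0%N w))) ->
  ('E_P[fun w => l (X 0%N w)] = 0)%E ->
  (n%:R%:E * 'E_P[fun w => (l (X 0%N w) ^+ 2)%R] = 1)%E ->
  (forall p, (1 <= p <= k)%N -> measurable_fun setT (t p)) ->
  (forall p, (1 <= p <= k)%N -> forall x y : p.-tuple R,
      perm_eq x y -> t p x = t p y) ->
  (forall p, (1 <= p <= k)%N -> P.-integrable setT (EFin \o Tv t X p)) ->
  (forall p, (1 <= p <= k)%N -> degenerate P t X p) ->
  (beta P n l X < +oo)%E ->
  let b := fine (beta P n l X) in
  (* (a) *)
  1 <= Num.sqrt n%:R * b /\
  (* (b) *)
  (forall q : R, 2 <= q <= 3 ->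
     (n%:R%:E * 'E_P[fun w => (`|l (X 0%N w)| `^ q)%R] <= (b `^ (q - 2))%:E)%E) /\
  (* (c) *)
  ((gamma P n k t X < +oo)%E ->
     forall s, (1 <= s <= k)%N ->
       (`|kappa P n l t X s| <= (Num.sqrt (fine (gamma_s P n t X s)))%:E)%E /\
       Num.sqrt (fine (gamma_s P n t X s)) <= Num.sqrt (fine (gamma P n k t X))) /\
  (* (d) *)
  (forall alpha : R, 3 / 2 < alpha < 2 ->
     let delta := (2 - alpha) / (alpha - 1) in
     forall s : nat, (1 <= s)%N -> s%:R < delta^-1 -> (s < k)%N ->
       (`|kappa P n l t X s| <=
          (b `^ (delta * s%:R))%:E + gamma_sa P n t X alpha s)%E /\
       ((b `^ (delta * s%:R))%:E + gamma_sa P n t X alpha s <=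
          (b `^ (delta * s%:R))%:E + gamma_a P n k t X alpha)%E).
Proof.
move=> _ n_gt0 mX indepX iddX ml _ _ moment2_L _ _ integrable_T _ beta_fin b.
have mT s : (1 <= s <= k)%N -> measurable_fun setT (Tv t X s).
  by move=> sk; have /integrableP[/measurable_EFinP] := integrable_T s sk.
have sN s : (s <= k)%N -> (s <= maxn n k)%N by move=> sk; rewrite leq_max sk orbT.
split; first exact: sqrt_n_mul_beta_ge1.
split; first by move=> q; exact: n_mul_moment_le_beta.
split=> [gamma_fin s /[dup] /andP[_ sk] sk1|alpha alpha_range delta s s_ge1 _ sk].
  have gs_le := gamma_s_le_gamma P n X t sk1.
  have gs_fin := le_lt_trans gs_le gamma_fin.
  split; first exact: abse_kappa_le_sqrt_gamma_s (sN _ sk) (mT _ sk1) gs_fin.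
  have gamma_ge0 : (0 <= gamma P n k t X)%E by apply: le_trans _ gs_le; exact: gamma_s_ge0.
  by rewrite ler_sqrt ?fine_ge0// fine_le// ge0_fin_numE ?gamma_s_ge0.
have sk1 : (1 <= s <= k)%N by rewrite s_ge1 ltnW.
split; first exact: abse_kappa_le_beta_gamma_sa (sN _ (ltnW sk)) (mT _ sk1).
by rewrite leeD2l// gamma_sa_le_gamma_a.
Qed.
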